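(* Let $\mu = (\mu_1,\mu_2,\ldots,\mu_n)$, $k = \sum_{i=1}^n \mu_i$, and $n = \sum_{i=1}^n i\mu_i$. Let $d$ be a positive integer such that $d \mid (n+2)$, and let $\zeta_d$ be a primitive $d$-th root of unity. \begin{enumerate} \item If there is one index $j$ such that $\mu_j \equiv 1 \pmod{d}$ and $\mu_i \equiv 0 \pmod{d}$ for all $i \neq j$, then \[ a_\mu(\zeta_d) = \binom{\frac{n+2}{d} + \frac{k-1}{d} - 1}{\frac{k-1}{d}} \binom{\frac{k-1}{d}}{\lfloor \frac{\mu_1}{d}\rfloor, \lfloor \frac{\mu_2}{d}\rfloor, \ldots, \lfloor \frac{\mu_n}{d}\rfloor} . \] \item If $d = 2$ and all $\mu_i$ are even, then \[ a_\mu(\zeta_{2}) = a_\mu(-1) = \binom{\frac{n+k}{2}}{\frac{k}{2}}\binom{\frac{k}{2}}{\frac{\mu_1}{2},\frac{\mu_2}{2},\ldots,\frac{\mu_n}{2}}. \] \item If $\mu$ satisfies neither (a) there is exactly one index $j$ with $\mu_j \equiv 1 \pmod{d}$ and $\mu_i \equiv 0 \pmod{d}$ for all $i \neq j$, nor (b) $d = 2$ and all $\mu_i$ are even, then $a_\mu(\zeta_d) = 0$. \end{enumerate}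
   Context: $a_\mu(q) = \frac{1}{[n+1]_q} \left[\begin{smallmatrix} n+k \\ k\end{smallmatrix}\right]_q \left[\begin{smallmatrix} k \\ \mu_1,\mu_2,\ldots,\mu_n\end{smallmatrix}\right]_q$, the naive $q$-analogue of $a_\mu = \frac{1}{n+1}\binom{n+k}{k}\binom{k}{\mu_1,\ldots,\mu_n}$, where $[\cdot]_q$ denotes $q$-integers and the bracketed expressions are $q$-binomial and $q$-multinomial coefficients. *)

From mathcomp Require Import all_boot all_order all_algebra all_field.
Set Implicit Arguments. Unset Strict Implicit. Unset Printing Implicit Defensive.
Import Order.TTheory GRing.Theory Num.Theory.
Local Open Scope ring_scope.

Section QAnalogues.
Variable R : fieldType.

Definition qint (m : nat) : {poly R} := \sum_(i < m) 'X^i.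

Definition qfact (m : nat) : {poly R} := \prod_(i < m) qint i.+1.

Definition qbinom (m j : nat) : {poly R} := qfact m %/ (qfact j * qfact (m - j)).

Definition qmultinom (k : nat) (n : nat) (mu : 'I_n -> nat) : {poly R} :=
  qfact k %/ \prod_(i < n) qfact (mu i).

Definition a_mu (n : nat) (mu : 'I_n -> nat) (x : R) : R :=
  let k := (\sum_(i < n) mu i)%N in
  (qbinom (n + k) k).[x] * (qmultinom k mu).[x] / (qint n.+1).[x].

End QAnalogues.

Definition multinomn (k : nat) (n : nat) (s : 'I_n -> nat) : nat :=
  (k`! %/ \prod_(i < n) (s i)`!)%N.

From mathcomp Require Import all_boot all_order all_algebra all_field.
From mathcomp Require Import ring zify.
Import GRing.Theory Num.Theory.

Set Implicit Arguments.
Unset Strict Implicit.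
Unset Printing Implicit Defensive.

Local Open Scope ring_scope.

(* At a primitive d-th root of unity z the Gaussian binomials obey the q-Lucas
   rule [m, j]_z = C(m / d, j / d) [m mod d, j mod d]_z.  Hence so do the
   q-multinomials as long as the residues s = sum_i (mu_i mod d) add up to less
   than d; otherwise they vanish at z.  Since n = -2 mod d, the denominator
   [n+1]_z equals [d-1]_z, which is nonzero, and [n+k, k]_z reduces to an
   ordinary binomial times [(s-2) mod d, s]_z.  That factor vanishes for
   2 <= s < d, it is [d-1]_z for s = 1 and cancels the denominator, and s = 0
   forces d | n, hence d | 2. *)

Section QBinomial.
Variable R : fieldType.

Fixpoint qbin (m j : nat) : {poly R} :=
  match m, j with
  | _, 0 => 1
  | 0, _.+1 => 0
  | m1.+1, j1.+1 => qbin m1 j1 + 'X^(j1.+1) * qbin m1 j1.+1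
  end.

Lemma qint0 : qint R 0 = 0.
Proof. by rewrite /qint big_ord0. Qed.

Lemma qintD a b : qint R (a + b) = qint R a + 'X^a * qint R b.
Proof.
rewrite /qint big_split_ord /= mulr_sumr; congr (_ + _).
by apply: eq_bigr => i _; rewrite exprD.
Qed.

Lemma qintSl m : qint R m.+1 = 1 + 'X * qint R m.
Proof. by rewrite -add1n qintD /qint big_ord1 expr0 expr1. Qed.

Lemma horner_qint_mul (x : R) m : (qint R m).[x] * (1 - x) = 1 - x ^+ m.
Proof.
rewrite /qint horner_sum mulrC -[RHS]opprB subrX1 -mulNr opprB.
by congr (_ * _); apply: eq_bigr => i _; rewrite hornerXn.
Qed.

Lemma qfactS m : qfact R m.+1 = qfact R m * qint R m.+1.
Proof. by rewrite /qfact big_ord_recr. Qed.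

Lemma qfact_neq0 m : qfact R m != 0.
Proof.
apply: contra_neq (@oner_neq0 R) => qfact0.
rewrite -(horner0 0) -qfact0 /qfact horner_prod big1 // => i _.
by rewrite qintSl hornerD hornerC hornerM hornerX mul0r addr0.
Qed.

Lemma qbin0 m : qbin m 0 = 1.
Proof. by case: m. Qed.

Lemma qbin_small m j : (m < j)%N -> qbin m j = 0.
Proof. by elim: m j => [|m IHm] [|j] //= lt_mj; rewrite !IHm ?mulr0 ?addr0 // ltnW. Qed.

Lemma qbinn m : qbin m m = 1.
Proof. by elim: m => //= m ->; rewrite qbin_small // mulr0 addr0. Qed.

Lemma qbin1 m : qbin m 1 = qint R m.
Proof. by elim: m => [|m IHm] /=; rewrite ?qint0 // qbin0 IHm qintSl. Qed.

Lemma qfact_qbin m j : (j <= m)%N -> qfact R m = qbin m j * qfact R j * qfact R (m - j).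
Proof.
elim: m j => [|m IHm] [|j] // le_jm; rewrite ?qbin0 ?subn0 ?mul1r /qfact ?big_ord0 ?mul1r //.
rewrite -!/(qfact R _) subSS.
have qbinS_fact : qbin m j.+1 * qfact R j.+1 * qfact R (m - j) = qint R (m - j) * qfact R m.
  have [lt_jm | le_mj] := ltnP j m.
    by rewrite (IHm _ lt_jm) -(subnSK lt_jm) (qfactS (m - _)); ring.
  by rewrite qbin_small ?ltnS // (eqP le_mj) ?subn_eq0 qint0 !mul0r.
rewrite /= qfactS.
have -> : qint R m.+1 = qint R j.+1 + 'X^(j.+1) * qint R (m - j).
  by rewrite -qintD addSn subnKC.
transitivity (qfact R m * qint R j.+1 + 'X^(j.+1) * (qint R (m - j) * qfact R m)); first ring.
by rewrite -qbinS_fact {1}(IHm j le_jm) qfactS; ring.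
Qed.

Lemma qbinomE m j : (j <= m)%N -> qbinom R m j = qbin m j.
Proof.
by move=> le_jm; rewrite /qbinom (qfact_qbin le_jm) -mulrA mulpK // mulf_neq0 ?qfact_neq0.
Qed.

End QBinomial.

Section QBinomialRoot.
Variables (R : fieldType) (d : nat) (z : R).
Hypotheses (d_gt1 : (1 < d)%N) (z_prim : d.-primitive_root z).

Let d_gt0 : (0 < d)%N. Proof. exact: ltnW. Qed.

Lemma subr1_prim_neq0 : 1 - z != 0.
Proof. by rewrite subr_eq0 eq_sym -[z]expr1 -(prim_order_dvd z_prim) dvdn1 neq_ltn d_gt1 orbT. Qed.

Lemma qint_prim_eq0 m : ((qint R m).[z] == 0) = (d %| m)%N.
Proof.
rewrite (prim_order_dvd z_prim) -[in RHS]subr_eq0 -[in RHS]oppr_eq0 opprB.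
by rewrite -horner_qint_mul mulf_eq0 (negbTE subr1_prim_neq0) orbF.
Qed.

Lemma qint_prim_neq0 m : (0 < m < d)%N -> (qint R m).[z] != 0.
Proof. by case/andP=> m_gt0 lt_md; rewrite qint_prim_eq0 gtnNdvd. Qed.

Lemma qint_prim_modn m : (qint R m).[z] = (qint R (m %% d)).[z].
Proof. by apply: (mulIf subr1_prim_neq0); rewrite !horner_qint_mul (prim_expr_mod z_prim). Qed.

Lemma qfact_prim_neq0 m : (m < d)%N -> (qfact R m).[z] != 0.
Proof.
move=> lt_md; rewrite /qfact horner_prod; apply/prodf_neq0 => i _.
by rewrite qint_prim_neq0 // (leq_ltn_trans (ltn_ord i)).
Qed.

Lemma qbin_prim_eq0 j : (0 < j < d)%N -> (qbin R d j).[z] = 0.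
Proof.
case/andP=> j_gt0 lt_jd.
have qfact_d : (qfact R d).[z] = 0.
  have /eqP qint_d : (qint R d).[z] == 0 by rewrite qint_prim_eq0.
  by rewrite -(prednK d_gt0) qfactS hornerM prednK // qint_d mulr0.
have := congr1 (horner^~ z) (qfact_qbin R (ltnW lt_jd)).
rewrite qfact_d !hornerM => /esym/eqP; rewrite !mulf_eq0.
rewrite (negbTE (qfact_prim_neq0 lt_jd)) (negbTE (qfact_prim_neq0 _)) ?orbF; last lia.
by move/eqP.
Qed.

Lemma qbin_lucas m j :
  (qbin R m j).[z] = 'C(m %/ d, j %/ d)%:R * (qbin R (m %% d) (j %% d)).[z].
Proof.
elim: m j => [|m IHm] [|j]; try by rewrite div0n mod0n bin0 !qbin0 hornerC mulr1.
  rewrite div0n mod0n qbin_small // horner0; have [lt_jd | le_dj] := ltnP j.+1 d.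
    by rewrite modn_small // qbin_small // horner0 mulr0.
  by rewrite bin0n eqn0Ngt divn_gt0 // le_dj mul0r.
have modn_dvdS k : (d %| k.+1)%N -> (k %% d = d.-1)%N.
  by move=> dvd_dk; have := @modn_pred k.+1 d; rewrite dvd_dk; apply; lia.
have modn_ndvdS k : ~~ (d %| k.+1)%N -> ((k %% d).+1 < d)%N.
  by move=> ndvd_dk; have := ltn_pmod k.+1 d_gt0; rewrite modnS (negbTE ndvd_dk).
rewrite /= hornerD hornerM hornerXn !IHm -(prim_expr_mod z_prim).
rewrite !divnS // !modnS.
(* Split on whether m.+1 and j.+1 complete a block of d; when only m.+1 does,
   the two Pascal terms add up to a multiple of [d, (j %% d).+1]_z = 0. *)
have [dvd_dm | ndvd_dm] := boolP (d %| m.+1)%N;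
  have [dvd_dj | ndvd_dj] := boolP (d %| j.+1)%N; rewrite /= ?add1n ?add0n.
- by rewrite !modn_dvdS // qbinn !qbin0 hornerC expr0 !mulr1 mul1r binS natrD addrC.
- have := qbin_prim_eq0 (j := (j %% d).+1); rewrite -[in qbin R d](prednK d_gt0) /=.
  rewrite hornerD hornerM hornerXn (modn_dvdS m dvd_dm) => /(_ (modn_ndvdS j ndvd_dj)) pascal.
  by rewrite horner0 mulr0 mulrCA -mulrDr pascal mulr0.
- rewrite (modn_dvdS j) // qbin_small; last by have := modn_ndvdS m ndvd_dm; lia.
  by rewrite horner0 mulr0 add0r expr0 mul1r qbin0.
- by rewrite hornerD hornerM hornerXn; ring.
Qed.

End QBinomialRoot.

Section SumDivMod.
Variables (I : Type) (r : seq I) (F : I -> nat) (d : nat).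

Lemma sum_divn_modn :
  (\sum_(i <- r) F i = (\sum_(i <- r) F i %/ d) * d + \sum_(i <- r) F i %% d)%N.
Proof. by rewrite big_distrl -big_split; apply: eq_bigr => i _; exact: divn_eq. Qed.

Hypothesis small_res : (\sum_(i <- r) F i %% d < d)%N.

Lemma divn_sum : ((\sum_(i <- r) F i) %/ d = \sum_(i <- r) F i %/ d)%N.
Proof. by rewrite sum_divn_modn divnMDl ?divn_small ?addn0 //; lia. Qed.

Lemma modn_sum : ((\sum_(i <- r) F i) %% d = \sum_(i <- r) F i %% d)%N.
Proof. by rewrite sum_divn_modn modnMDl modn_small. Qed.

End SumDivMod.

Fixpoint qmultin (R : fieldType) (I : Type) (r : seq I) (F : I -> nat) : {poly R} :=
  if r is x :: r' then qbin R (F x + \sum_(i <- r') F i) (F x) * qmultin R r' F else 1.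

Fixpoint multin (I : Type) (r : seq I) (F : I -> nat) : nat :=
  if r is x :: r' then 'C(F x + \sum_(i <- r') F i, F x) * multin r' F else 1.

Lemma fact_sum (I : Type) (r : seq I) (F : I -> nat) :
  ((\sum_(i <- r) F i)`! = multin r F * \prod_(i <- r) (F i)`!)%N.
Proof.
elim: r => [|x r IHr]; rewrite ?big_nil // !big_cons /=.
by rewrite -(@bin_fact _ (F x)) ?leq_addr // addKn IHr; lia.
Qed.

Lemma multinomnE n (mu : 'I_n -> nat) :
  multinomn (\sum_(i < n) mu i) mu = multin (index_enum 'I_n) mu.
Proof. by rewrite /multinomn fact_sum mulnK // prodn_gt0 // => i; exact: fact_gt0. Qed.

Section QMultinomial.
Variable R : fieldType.

Lemma qfact_sum (I : Type) (r : seq I) (F : I -> nat) :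
  qfact R (\sum_(i <- r) F i) = qmultin R r F * \prod_(i <- r) qfact R (F i).
Proof.
elim: r => [|x r IHr]; first by rewrite !big_nil /qfact big_ord0 mulr1.
by rewrite !big_cons /= (@qfact_qbin _ _ (F x)) ?leq_addr // addKn IHr; ring.
Qed.

Lemma qmultinomE n (mu : 'I_n -> nat) :
  qmultinom R (\sum_(i < n) mu i) mu = qmultin R (index_enum 'I_n) mu.
Proof.
rewrite /qmultinom qfact_sum mulpK // prodf_seq_neq0.
by apply/allP => i _; exact: qfact_neq0.
Qed.

Lemma qmultin_sum_le1 (I : Type) (r : seq I) (F : I -> nat) :
  (\sum_(i <- r) F i <= 1)%N -> qmultin R r F = 1.
Proof.
elim: r => [|x r IHr] //=; rewrite big_cons => sum_le1.
rewrite IHr; last by lia.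
have [-> | Fx_gt0] := posnP (F x); first by rewrite qbin0 mulr1.
have -> : (\sum_(i <- r) F i = 0)%N by lia.
by rewrite addn0 qbinn mulr1.
Qed.

End QMultinomial.

Section QMultinomialRoot.
Variables (R : fieldType) (d : nat) (z : R).
Hypotheses (d_gt1 : (1 < d)%N) (z_prim : d.-primitive_root z).

Lemma qmultin_lucas (I : Type) (r : seq I) (F : I -> nat) :
  (\sum_(i <- r) F i %% d < d)%N ->
  (qmultin R r F).[z] =
    (multin r (fun i => F i %/ d)%N)%:R * (qmultin R r (fun i => F i %% d)%N).[z].
Proof.
elim: r => [|x r IHr] /=; first by rewrite mul1r.
move=> res_lt; have := divn_sum res_lt; have := modn_sum res_lt.
rewrite !big_cons in res_lt * => modn_top divn_top.
rewrite !hornerM IHr; last by lia.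
by rewrite (qbin_lucas d_gt1 z_prim) divn_top modn_top natrM; ring.
Qed.

Lemma qmultin_prim_eq0 (I : Type) (r : seq I) (F : I -> nat) :
  (d <= \sum_(i <- r) F i %% d)%N -> (qmultin R r F).[z] = 0.
Proof.
elim: r => [|x r IHr] /=; first by rewrite big_nil => ?; exfalso; lia.
rewrite big_cons hornerM => res_ge.
have [res_lt_r | res_ge_r] := ltnP (\sum_(i <- r) F i %% d) d; last by rewrite IHr ?mulr0.
rewrite (qbin_lucas d_gt1 z_prim) qbin_small ?horner0 ?mulr0 ?mul0r //.
have Fx_lt : (F x %% d < d)%N by rewrite ltn_pmod // ltnW.
rewrite -modnDm (modn_sum res_lt_r) -(subnK res_ge) modnDr modn_small; lia.
Qed.

End QMultinomialRoot.

Lemma sum_modn_eq0 (I : finType) (F : I -> nat) d :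
  (\sum_i F i %% d = 0)%N <-> (forall i, F i = 0 %[mod d]).
Proof.
rewrite mod0n (rwP eqP) sum_nat_eq0.
by split=> [/forallP res0 i | res0]; [apply/eqP/res0 | apply/forallP => i; apply/eqP/res0].
Qed.

Lemma sum_modn_eq1 (I : finType) (F : I -> nat) d : (1 < d)%N ->
  (\sum_i F i %% d = 1)%N <->
  (exists j, F j = 1 %[mod d] /\ (forall i, i != j -> F i = 0 %[mod d])).
Proof.
move=> d_gt1; rewrite mod0n (modn_small d_gt1) (rwP eqP).
split=> [/sum_nat_eq1 [j [_ res1 res0]] | [j [res1 res0]]].
  by exists j; split=> // i /res0; apply.
by apply/sum_nat_eq1; exists j; split=> // i /res0.
Qed.

Lemma res_sum0_d_eq2 n (mu : 'I_n -> nat) d :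
  (1 < d)%N -> (d %| n + 2)%N -> n = (\sum_(i < n) i.+1 * mu i)%N ->
  (\sum_(i < n) mu i %% d)%N = 0%N -> d = 2%N.
Proof.
move=> d_gt1 d_dvd n_eq /sum_modn_eq0; rewrite mod0n => res0.
have dvd_dn : (d %| n)%N by rewrite n_eq; apply: dvdn_sum => i _; apply/dvdn_mull/eqP/res0.
have /(dvdn_leq (isT : 0 < 2)%N) : (d %| 2)%N by rewrite -(dvdn_addr 2 dvd_dn).
lia.
Qed.

Section Lemma2p1.
Variables (n : nat) (mu : 'I_n -> nat) (d : nat) (z : algC).
Hypotheses (d_gt1 : (1 < d)%N) (d_dvd : (d %| n + 2)%N) (z_prim : d.-primitive_root z).

Local Notation k := (\sum_(i < n) mu i)%N.
Local Notation s := (\sum_(i < n) mu i %% d)%N.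

Let modn_n1 : (n.+1 %% d = d.-1)%N.
Proof.
have dvd_dn2 : (d %| n.+2)%N by rewrite -addn2.
by have := @modn_pred n.+2 d; rewrite dvd_dn2; apply; lia.
Qed.

Let modn_n : (n %% d = d - 2)%N.
Proof.
have ndvd : ~~ (d %| n.+1)%N.
  by apply: contraL d_dvd => dvd_dn1; rewrite addn2 -addn1 dvdn_addr // gtnNdvd.
by rewrite -[n in LHS]/(n.+1.-1) modn_pred ?(negbTE ndvd) ?modn_n1; lia.
Qed.

(* [(d - 2 + s) %% d] is [(n + k) %% d], as n = -2 and k = s modulo d. *)
Lemma a_mu_lucas : (s < d)%N ->
  a_mu mu z =
    ('C((n + k) %/ d, k %/ d) * multinomn (k %/ d) (fun i => mu i %/ d)%N)%:R
    * (qbin algC ((d - 2 + s) %% d) s).[z]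
    * (qmultin algC (index_enum 'I_n) (fun i => mu i %% d)%N).[z]
    / (qint algC d.-1).[z].
Proof.
move=> res_lt.
rewrite /a_mu qbinomE ?leq_addl // qmultinomE (qbin_lucas d_gt1 z_prim).
rewrite (qmultin_lucas d_gt1 z_prim) // [(qint _ n.+1).[z]](qint_prim_modn d_gt1 z_prim) modn_n1.
rewrite -modnDm modn_n (modn_sum res_lt) (divn_sum res_lt) multinomnE natrM; ring.
Qed.

Lemma a_mu_res_sum1 : s = 1%N ->
  a_mu mu z = ('C((n + 2) %/ d + (k - 1) %/ d - 1, (k - 1) %/ d)
                * multinomn ((k - 1) %/ d) (fun i => mu i %/ d)%N)%:R.
Proof.
move=> s1; have res_lt : (s < d)%N by rewrite s1.
rewrite a_mu_lucas // qmultin_sum_le1 ?s1 // hornerC mulr1.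
have qint_neq0 : (qint algC d.-1).[z] != 0 by apply: (qint_prim_neq0 d_gt1 z_prim); lia.
rewrite (_ : d - 2 + 1 = d.-1)%N ?modn_small ?qbin1 ?mulfK //; try lia.
have [q k_eq] : exists q, k = (q * d + 1)%N.
  by exists (k %/ d)%N; rewrite {1}(divn_eq k d) (modn_sum res_lt) s1.
have [c n2_eq] := dvdnP d_dvd.
have c_gt0 : (0 < c)%N by nia.
have -> : (n + k = (c + q - 1) * d + d.-1)%N by nia.
rewrite k_eq n2_eq addnK !mulnK ?divnMDl ?divn_small ?addn0 //; lia.
Qed.

Lemma a_mu_res_sum0 : d = 2%N -> s = 0%N ->
  a_mu mu z = ('C((n + k) %/ d, k %/ d) * multinomn (k %/ d) (fun i => mu i %/ d)%N)%:R.
Proof.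
move=> d2 s0; have res_lt : (s < d)%N by rewrite s0 d2.
rewrite a_mu_lucas // s0 qbin0 qmultin_sum_le1 ?s0 // d2.
by rewrite /qint big_ord1 expr0 hornerC !mulr1 divr1.
Qed.

Lemma a_mu_res_sum_ge2 : (2 <= s)%N -> a_mu mu z = 0.
Proof.
move=> res_ge2; have [res_lt | res_ge] := ltnP s d.
  rewrite a_mu_lucas // qbin_small ?horner0 ?mulr0 ?mul0r //.
  by rewrite (_ : d - 2 + s = s - 2 + d)%N ?modnDr ?modn_small; lia.
by rewrite /a_mu qmultinomE (qmultin_prim_eq0 d_gt1 z_prim) // mulr0 mul0r.
Qed.

End Lemma2p1.

Theorem lemma2p1 (n : nat) (mu : 'I_n -> nat) (d : nat) (z : algC) :
  (0 < n)%N ->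
  n = (\sum_(i < n) i.+1 * mu i)%N ->
  (2 <= d)%N ->
  (d %| n + 2)%N ->
  d.-primitive_root z ->
  let k := (\sum_(i < n) mu i)%N in
  ((exists j : 'I_n, mu j = 1 %[mod d] /\ (forall i : 'I_n, i != j -> mu i = 0 %[mod d])) ->
     a_mu mu z =
     ('C((n + 2) %/ d + (k - 1) %/ d - 1, (k - 1) %/ d)
        * multinomn ((k - 1) %/ d) (fun i => mu i %/ d))%N%:R)
  /\ (d = 2%N -> (forall i : 'I_n, mu i = 0 %[mod 2]) ->
     a_mu mu z =
     ('C((n + k) %/ 2, k %/ 2) * multinomn (k %/ 2) (fun i => mu i %/ 2))%N%:R)
  /\ (~ (exists j : 'I_n, mu j = 1 %[mod d] /\ (forall i : 'I_n, i != j -> mu i = 0 %[mod d])) ->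
      ~ (d = 2%N /\ (forall i : 'I_n, mu i = 0 %[mod 2])) ->
      a_mu mu z = 0).
Proof.
move=> _ n_eq d_gt1 d_dvd z_prim k.
have res_sum1 := sum_modn_eq1 mu d_gt1.
split; [|split].
- by move=> /res_sum1 s1; apply: a_mu_res_sum1.
- by move=> d2 /sum_modn_eq0 s0; subst d; apply: a_mu_res_sum0.
- move=> not_a not_b; apply: (a_mu_res_sum_ge2 d_gt1 d_dvd z_prim).
  have s_neq0 : (\sum_(i < n) mu i %% d != 0)%N.
    apply/eqP => s0; have d2 := res_sum0_d_eq2 d_gt1 d_dvd n_eq s0.
    by apply: not_b; split=> //; apply/sum_modn_eq0; rewrite -d2.
  have s_neq1 : (\sum_(i < n) mu i %% d != 1)%N by apply/eqP => /res_sum1.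
  by move: s_neq0 s_neq1; case: (\sum_(i < n) mu i %% d)%N => [|[]].
Qed.
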